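(* Fix $\alpha>1$ and parameters $\varepsilon_0,\delta_0,r,\varepsilon_1,\delta_1,\Delta^{\mathrm{disc}},\Delta>0$, and let $\phi_r$ be the weighted partition selection primitive defined from them. Let $X, X' \in \mathbb{R}_{\ge0}^U$ differ in at most one coordinate $u$, with $|X_u - X'_u| \le \Delta_\infty \le \Delta$. Then, provided $\delta_0+\delta_1\Delta_\infty^r<1$, $$\max\left\{D^{\delta}_\alpha(M_{\phi_r}(X)\|M_{\phi_r}(X')),\ D^{\delta}_\alpha(M_{\phi_r}(X')\|M_{\phi_r}(X))\right\}\le \varepsilon,$$ where $\delta = \delta_0+\delta_1\Delta_\infty^r$ and $\varepsilon = \varepsilon_0+\varepsilon_1\Delta_\infty^r$. In other words, for $\Delta_0 = 1$ and $\Delta_\infty\le\Delta$, $\phi_r$ satisfies $(\delta_0+\delta_1\Delta_\infty^r,\alpha,\varepsilon_0+\varepsilon_1\Delta_\infty^r)$-RDP.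
   Context: $\mathrm{Ber}(p)$: Bernoulli distribution. For $\alpha>1$, $D_\alpha(P\|Q)=\frac{1}{\alpha-1}\log\sum_x P(x)^\alpha Q(x)^{1-\alpha}$ and $D^\delta_\alpha(P\|Q)=\inf\{D_\alpha(P'\|Q'): P=(1-\delta)P'+\delta P'',\ Q=(1-\delta)Q'+\delta Q''\}$ over probability distributions. Define $L(q,\varepsilon,\delta) = \max\{p\in[q,1] : D^\delta_\alpha(\mathrm{Ber}(p)\|\mathrm{Ber}(q))\le\varepsilon \text{ and } D^\delta_\alpha(\mathrm{Ber}(q)\|\mathrm{Ber}(p))\le\varepsilon\}$. Let $N_{\mathrm{disc}} = \lceil \Delta/\Delta^{\mathrm{disc}}\rceil$. The discretized primitive $\psi_r:\mathbb{Z}_{\ge0}\to[0,1]$ is $\psi_r(0)=0$ and, for $n>0$, $$\psi_r(n) = \min_{i\in\{1,\dots,\min\{n,N_{\mathrm{disc}}\}\}} L\!\left(\psi_r(n-i),\ \varepsilon_0+\varepsilon_1(\Delta^{\mathrm{disc}}(i-1))^r,\ \delta_0+\delta_1(\Delta^{\mathrm{disc}}(i-1))^r\right).$$ The weighted primitive is $\phi_r(y) = \psi_r(\lfloor y/\Delta^{\mathrm{disc}}\rfloor)$ for $y\ge0$. For a weighted dataset $X\in\mathbb{R}_{\ge0}^U$, the mechanism $M_{\phi_r}(X)$ outputs the random subset of $U$ containing each $u$ independently with probability $\phi_r(X_u)$. $(\delta,\alpha,\varepsilon)$-RDP means $D^\delta_\alpha(M(X)\|M(X'))\le\varepsilon$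 for all neighboring pairs in both orders. *)

From HB Require Import structures.
From mathcomp Require Import all_boot all_order all_algebra.
From mathcomp Require Import all_classical all_reals all_analysis.
Set Implicit Arguments. Unset Strict Implicit. Unset Printing Implicit Defensive.
Import Order.TTheory GRing.Theory Num.Theory.
Local Open Scope classical_set_scope.
Local Open Scope ring_scope.

Section Defs.
Variable R : realType.

Definition is_distr (T : finType) (P : T -> R) : Prop :=
  (forall x, 0 <= P x) /\ \sum_(x : T) P x = 1.

Definition ber (p : R) : bool -> R := fun b => if b then p else 1 - p.

Definition renyi_term (a : R) (px qx : R) : \bar R :=
  if qx == 0 then (if px == 0 then 0%E else +oo%E)
  else (px `^ a * qx `^ (1 - a))%:E.

Definition renyi (a : R) (T : finType) (P Q : T -> R) : \bar R :=
  match (\sum_(x : T) renyi_term a (P x) (Q x))%E with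
  | r%:E => (ln r / (a - 1))%:E
  | _ => +oo%E
  end.

Definition renyi_approx (a d : R) (T : finType) (P Q : T -> R) : \bar R :=
  ereal_inf [set e | exists P' P'' Q' Q'' : T -> R,
    [/\ is_distr P', is_distr P'', is_distr Q', is_distr Q'' &
        [/\ (forall x, P x = (1 - d) * P' x + d * P'' x),
             (forall x, Q x = (1 - d) * Q' x + d * Q'' x) &
             e = renyi a P' Q']]].

Definition Lfun (a q eps d : R) : R :=
  sup [set p : R | [/\ q <= p, p <= 1,
        (renyi_approx a d (ber p) (ber q) <= eps%:E)%E &
        (renyi_approx a d (ber q) (ber p) <= eps%:E)%E]].

Definition Ndisc (D Dd : R) : nat := `|Num.ceil (D / Dd)|%N.

(* psi_seq n = [:: psi 0; ...; psi n]; the min over i in {1..min(n,Ndisc)}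
   is written with index j = i - 1 ranging over 'I_(min(n,Ndisc)). *)
Fixpoint psi_seq (a e0 d0 r e1 d1 Dd D : R) (n : nat) : seq R :=
  match n with
  | 0 => [:: 0]
  | m.+1 =>
      let s := psi_seq a e0 d0 r e1 d1 Dd D m in
      rcons s (\big[Order.min/1]_(j < minn m.+1 (Ndisc D Dd))
                 Lfun a (nth 0 s (m.+1 - j.+1))
                   (e0 + e1 * (Dd * j%:R) `^ r)
                   (d0 + d1 * (Dd * j%:R) `^ r))
  end.

Definition psi (a e0 d0 r e1 d1 Dd D : R) (n : nat) : R :=
  nth 0 (psi_seq a e0 d0 r e1 d1 Dd D n) n.

Definition phi (a e0 d0 r e1 d1 Dd D : R) (y : R) : R :=
  psi a e0 d0 r e1 d1 Dd D `|Num.floor (y / Dd)|%N.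

(* Output distribution of M_phi(X) on subsets of U: independent inclusion. *)
Definition mech (U : finType) (f : R -> R) (X : U -> R) : {set U} -> R :=
  fun S => \prod_(v : U) (if v \in S then f (X v) else 1 - f (X v)).

End Defs.

(* Since X and X' differ only at u and the mechanism samples coordinates independently,
   both approximate divergences are bounded by those between the Bernoulli distributions
   Ber (phi (X u)) and Ber (phi (X' u)).  Their discretized indices n >= m satisfy
   n - m <= N_disc and Dd * (n - m - 1) <= Dinf, and the recursion gives
   psi n <= L (psi m, eps_(n-m-1), delta_(n-m-1)); as L is monotone in its budgets, it
   remains to see that every p in [q, L (q, eps, delta)] meets both divergence bounds,
   i.e. that the supremum defining L is attained.
   For q + delta < p the delta-approximate divergence of Bernoullis is the exact one between
   Ber ((p - delta) / (1 - delta)) and Ber (q / (1 - delta)).  The Renyi sum of two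
   Bernoullis grows as the parameters move apart (a Karamata-type convexity argument for
   t |-> t ^ c, c outside (0, 1)), is locally Lipschitz and blows up as the second
   parameter tends to 1, so the sublevel set is closed and L belongs to it. *)

From Pilot Require Import Defs.
From mathcomp Require Import all_boot all_order all_algebra.
From mathcomp Require Import all_classical all_reals all_analysis.
From mathcomp Require Import ring lra.
Import Order.TTheory GRing.Theory Num.Theory.
Set Implicit Arguments. Unset Strict Implicit. Unset Printing Implicit Defensive.
Local Open Scope ring_scope.

Section PowerConvexity.
Variable R : realType.
Implicit Types c m p s t u v w y : R.

Lemma powR_gt0E u c : 0 < u -> u `^ c = expR (c * ln u).
Proof. by move=> u0; rewrite /powR gt_eqF. Qed.

Lemma le0_ger_powR c u v : c <= 0 -> 0 < u -> u <= v -> v `^ c <= u `^ c.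
Proof.
move=> c0 u0 uv; have v0 : 0 < v by exact: lt_le_trans uv.
rewrite !powR_gt0E // ler_expR.
have : ln u <= ln v by rewrite ler_ln ?posrE.
nra.
Qed.

Lemma powR_mulB1 c w y : 0 < w -> 0 <= y ->
  y `^ c * w `^ (1 - c) = w * (y / w) `^ c.
Proof.
move=> w0 y0; rewrite powRM ?invr_ge0 ?(ltW w0) // -(powR_inv1 (ltW w0)).
rewrite -powRrM mulN1r powRN powRB; last by rewrite (gt_eqF w0) implybT.
by rewrite powRr1 ?(ltW w0) // mulrCA.
Qed.

Lemma powR_mul1B c w y : 0 < w -> 0 <= y ->
  w `^ c * y `^ (1 - c) = w * (y / w) `^ (1 - c).
Proof. by move=> w0 y0; rewrite -powR_mulB1 // subKr mulrC. Qed.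

Lemma powR_mul_powR1B c w : c != 0 -> 0 <= w -> w `^ c * w `^ (1 - c) = w.
Proof.
move=> c0 w0; have [->|wn0] := eqVneq w 0; first by rewrite powR0 ?mul0r.
by rewrite -powRD ?wn0 ?implybT // addrC subrK powRr1.
Qed.

(* The region where [y |-> y `^ c] is convex and finite. *)
Definition convex_pow_dom c y := (1 <= c /\ 0 <= y) \/ (c <= 0 /\ 0 < y).

Lemma convex_pow_dom_ge1 c y : 1 <= c \/ c <= 0 -> 1 <= y -> convex_pow_dom c y.
Proof. by case=> hc y1; [left|right]; split => //; lra. Qed.

Lemma powR_bernoulli_le0 c v : c <= 0 -> 0 < v -> 1 + c * (v - 1) <= v `^ c.
Proof.
move=> c0 v0; rewrite powR_gt0E //; apply: le_trans (expR_ge1Dx _).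
have := @le_ln1Dx R (v - 1) ltac:(lra); rewrite addrC subrK; nra.
Qed.

Lemma powR_bernoulli_ge1 c v : 1 <= c -> 0 <= v -> 1 + c * (v - 1) <= v `^ c.
Proof.
move=> c1 v0; have [->|vn0] := eqVneq v 0; first by rewrite powR0; lra.
have vpos : 0 < v by rewrite lt_neqAle eq_sym vn0 v0.
rewrite -mulr_powRB1 //; last by lra.
have -> : v `^ (c - 1) = v^-1 `^ (1 - c).
  by rewrite -(powR_inv1 (ltW vpos)) -powRrM; congr powR; ring.
have -> : 1 + c * (v - 1) = v * (1 + (1 - c) * (v^-1 - 1)) by field; rewrite gt_eqF.
rewrite ler_pM2l //; apply: powR_bernoulli_le0; first by lra.
by rewrite invr_gt0.
Qed.

Lemma powR_bernoulli c v : convex_pow_dom c v -> 1 + c * (v - 1) <= v `^ c.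
Proof. by case=> -[]; [apply: powR_bernoulli_ge1 | apply: powR_bernoulli_le0]. Qed.

Lemma powR_tangent c m y : convex_pow_dom c y -> 0 < m ->
  m `^ c + c * (m `^ c / m) * (y - m) <= y `^ c.
Proof.
move=> dy m0.
have dv : convex_pow_dom c (y / m).
  by case: dy => -[h1 h2]; [left|right]; split => //;
    [exact: divr_ge0 (ltW m0) | exact: divr_gt0].
have y0 : 0 <= y by case: dy => -[_ h]; lra.
rewrite {2}(_ : y = m * (y / m)); last by rewrite mulrC divfK ?lt0r_neq0.
rewrite powRM ?divr_ge0 ?(ltW m0) //.
have -> : m `^ c + c * (m `^ c / m) * (y - m) = m `^ c * (1 + c * (y / m - 1)).
  by field; rewrite gt_eqF.
by apply: ler_wpM2l; [exact: powR_ge0 | exact: powR_bernoulli].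
Qed.

(* Between [1] and [y] every tangent slope [c * m `^ (c - 1)] lies on the same side of [c]. *)
Lemma powR_ge_slope1 c m y : convex_pow_dom c m -> convex_pow_dom c y ->
  (1 <= m <= y) \/ (y <= m <= 1) -> m `^ c + c * (y - m) <= y `^ c.
Proof.
move=> dm dy hmy.
have [m0|mn0] := eqVneq m 0.
  case: hmy => /andP[m1 my]; first by move: m1; rewrite m0; lra.
  have -> : y = 0 by case: dy => -[_ hy]; lra.
  by rewrite m0 subrr mulr0 addr0.
have mpos : 0 < m by rewrite lt_neqAle eq_sym mn0; case: dm => -[_ h]; lra.
apply: le_trans (powR_tangent dy mpos); rewrite lerD2l.
set k := m `^ c / m.
have hc : 1 <= c \/ c <= 0 by case: dm => -[? _]; [left|right].
case: hc => hc; case: hmy => /andP[h1 h2].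
- have : 1 <= k by rewrite /k ler_pdivlMr // mul1r le1r_powR.
  have : 0 <= c * (y - m) by apply: mulr_ge0; lra.
  nra.
- have : k <= 1 by rewrite /k ler_pdivrMr // mul1r ge1r_powR // mpos.
  have : 0 <= c * (m - y) by apply: mulr_ge0; lra.
  nra.
- have : k <= 1 by rewrite /k ler_pdivrMr // mul1r ler1_powR //; lra.
  have : 0 <= - c * (y - m) by apply: mulr_ge0; lra.
  nra.
- have : 1 <= k by rewrite /k ler_pdivlMr // mul1r ger1_powR // ?mpos //; lra.
  have : 0 <= - c * (m - y) by apply: mulr_ge0; lra.
  nra.
Qed.

(* Karamata-type inequality: pushing two points of fixed weighted mean away from [1]
   increases the weighted sum of their [c]-th powers. *)
Lemma powR_spread c w1 w2 s s' t t' : 0 <= w1 -> 0 <= w2 ->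
  w1 * s + w2 * t = w1 * s' + w2 * t' ->
  1 <= s' <= s -> t <= t' <= 1 -> convex_pow_dom c t -> 1 <= c \/ c <= 0 ->
  w1 * s' `^ c + w2 * t' `^ c <= w1 * s `^ c + w2 * t `^ c.
Proof.
move=> w10 w20 E /andP[hs1 hs2] /andP[ht1 ht2] dt hc.
have dt' : convex_pow_dom c t' by case: dt => -[h1 h2]; [left|right]; split => //; lra.
have hs := powR_ge_slope1 (convex_pow_dom_ge1 hc hs1)
  (convex_pow_dom_ge1 hc (le_trans hs1 hs2)) (or_introl (introT andP (conj hs1 hs2))).
have ht := powR_ge_slope1 dt' dt (or_intror (introT andP (conj ht1 ht2))).
have := ler_wpM2l w10 hs; have := ler_wpM2l w20 ht.
have : c * (w1 * (s - s') + w2 * (t - t')) = 0.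
  by rewrite (_ : w1 * (s - s') + w2 * (t - t') = 0) ?mulr0 //; lra.
nra.
Qed.

Lemma powR_spread_ber c w p p' : 0 < w < 1 -> w <= p' <= p -> p <= 1 ->
  1 <= c \/ c <= 0 -> (c <= 0 -> p < 1) ->
  w * (p' / w) `^ c + (1 - w) * ((1 - p') / (1 - w)) `^ c <=
  w * (p / w) `^ c + (1 - w) * ((1 - p) / (1 - w)) `^ c.
Proof.
move=> /andP[w0 w1] /andP[wp' p'p] p1 hc hp.
have w1' : 0 < 1 - w by lra.
have dt : convex_pow_dom c ((1 - p) / (1 - w)).
  case: hc => hc; [left|right]; split => //; first by apply: divr_ge0; lra.
  by apply: divr_gt0 => //; have := hp hc; lra.
apply: powR_spread dt hc; [lra | lra | | | ].
- by rewrite ![w * (_ / w)]mulrC ![(1 - w) * _]mulrC !divfK ?lt0r_neq0 //; lra.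
- by rewrite ler_pdivlMr // mul1r ler_pM2r ?invr_gt0 // wp'.
- by rewrite ler_pM2r ?invr_gt0 // ler_pdivrMr // mul1r; apply/andP; split; lra.
Qed.

End PowerConvexity.

Section BernoulliRenyi.
Variables (R : realType) (a : R).
Hypothesis a_gt1 : 1 < a.
Implicit Types x z : R.

Let a_gt0 : 0 < a. Proof. exact: lt_trans a_gt1. Qed.
Let a1_lt0 : 1 - a < 0. Proof. by rewrite subr_lt0. Qed.

Definition ber_renyi_sum (x z : R) :=
  x `^ a * z `^ (1 - a) + (1 - x) `^ a * (1 - z) `^ (1 - a).
Local Notation T := ber_renyi_sum.

Lemma ber_renyi_sum_le_incrL x (x' : R) z : 0 < z < 1 -> z <= x' -> x' <= x -> x <= 1 ->
  T x' z <= T x z.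
Proof.
move=> /andP[z0 z1] zx' x'x x1.
rewrite /T !powR_mulB1 ?subr_gt0 ?subr_ge0 //; try lra.
apply: powR_spread_ber => //; [exact/andP | exact/andP | left; exact: ltW | by rewrite leNgt a_gt0].
Qed.

Lemma ber_renyi_sum_le_decrR x z (z' : R) :
  0 < x <= 1 -> 0 < z -> z <= z' -> z' <= x -> z' < 1 -> T x z' <= T x z.
Proof.
move=> /andP[x0 x1] z0 zz' z'x z'1.
have [->|xn1] := eqVneq x 1.
  rewrite /T subrr !powR0 ?gt_eqF // !mul0r !addr0 !powR1 !mul1r.
  by apply: le0_ger_powR => //; exact: ltW.
have x1' : 0 < 1 - x by rewrite subr_gt0 lt_neqAle xn1 x1.
rewrite /T !powR_mul1B ?subr_ge0 //; try lra.
rewrite addrC [X in _ <= X]addrC.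
have := powR_spread_ber (c := 1 - a) (w := 1 - x) (p := 1 - z) (p' := 1 - z').
rewrite !subKr; apply; [apply/andP; split; lra | apply/andP; split; lra | lra |
  right; exact: ltW | move=> _; lra].
Qed.

Lemma ber_renyi_sum_le_incrR x (x' : R) z : 0 <= z -> z <= x' -> x' <= x -> x < 1 ->
  T z x' <= T z x.
Proof.
move=> z0 zx' x'x x1.
have [->|zn0] := eqVneq z 0.
  rewrite /T subr0 !powR0 ?gt_eqF // !mul0r !add0r !powR1 !mul1r.
  by apply: le0_ger_powR; rewrite ?(ltW a1_lt0); lra.
have zpos : 0 < z by rewrite lt_neqAle eq_sym zn0 z0.
rewrite /T !powR_mul1B ?subr_ge0 //; try lra.
apply: powR_spread_ber; [apply/andP; split; lra | apply/andP; split; lra | lra |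
  right; exact: ltW | move=> _; lra].
Qed.

Lemma ber_renyi_sum_le_decrL x z (z' : R) : 0 <= z -> z <= z' -> z' <= x -> 0 < x < 1 ->
  T z' x <= T z x.
Proof.
move=> z0 zz' z'x /andP[x0 x1].
rewrite /T !powR_mulB1 ?subr_gt0 ?subr_ge0 //; try lra.
rewrite addrC [X in _ <= X]addrC.
have := powR_spread_ber (c := a) (w := 1 - x) (p := 1 - z) (p' := 1 - z').
rewrite !subKr; apply; [apply/andP; split; lra | apply/andP; split; lra | lra |
  left; exact: ltW | by rewrite leNgt a_gt0].
Qed.

Lemma ber_renyi_sum_gt0 x z : 0 <= x <= 1 -> 0 < z < 1 -> 0 < T x z.
Proof.
move=> /andP[x0 x1] /andP[z0 z1].
have h2 : 0 <= (1 - x) `^ a * (1 - z) `^ (1 - a) by rewrite mulr_ge0 ?powR_ge0.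
have [->|xn0] := eqVneq x 0.
  by rewrite /T subr0 powR1 mul1r powR0 ?gt_eqF // mul0r add0r powR_gt0 //; lra.
have : 0 < x `^ a * z `^ (1 - a) by rewrite mulr_gt0 // powR_gt0 // lt_neqAle eq_sym xn0.
rewrite /T; lra.
Qed.

Lemma renyi_berE x z : 0 < z < 1 ->
  renyi a (ber x) (ber z) = (ln (T x z) / (a - 1))%:E.
Proof.
move=> /andP[z0 z1].
rewrite /renyi big_bool /= /renyi_term /ber (gt_eqF z0).
by rewrite (_ : (1 - z == 0) = false) -?EFinD //; apply/negbTE; apply/eqP; lra.
Qed.

Lemma renyi_ber_ber0 x : 0 < x -> renyi a (ber x) (ber 0) = +oo%E.
Proof.
move=> x0; rewrite /renyi big_bool /= /renyi_term /ber eqxx (gt_eqF x0) subr0.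
by rewrite oner_eq0.
Qed.

Lemma renyi_ber_ber1 z : z < 1 -> renyi a (ber z) (ber 1) = +oo%E.
Proof.
move=> z1; rewrite /renyi big_bool /= /renyi_term /ber subrr eqxx oner_eq0.
by rewrite (_ : (1 - z == 0) = false) /= ?addey //; apply/negbTE; apply/eqP; lra.
Qed.

Lemma renyi_xx (U : finType) (P : U -> R) : is_distr P -> renyi a P P = 0%:E.
Proof.
move=> [P0 P1]; rewrite /renyi.
have -> : (\sum_(x : U) renyi_term a (P x) (P x) = (\sum_(x : U) P x)%:E)%E.
  rewrite -sumEFin; apply: eq_bigr => x _; rewrite /renyi_term.
  have [->|pn0] := eqVneq (P x) 0; first by [].
  by rewrite -powRD ?pn0 ?implybT // addrC subrK powRr1.
by rewrite P1 /= ln1 mul0r.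
Qed.

Lemma lee_ln_div (T1 T2 : R) : 0 < T1 -> T1 <= T2 ->
  ((ln T1 / (a - 1))%:E <= (ln T2 / (a - 1))%:E)%E.
Proof.
move=> T10 T12; rewrite lee_fin ler_pM2r ?invr_gt0 ?subr_gt0 //.
by rewrite ler_ln ?posrE //; lra.
Qed.

Lemma lee_ln_div_expR (T0 e : R) : 0 < T0 ->
  ((ln T0 / (a - 1))%:E <= e%:E)%E = (T0 <= expR ((a - 1) * e)).
Proof.
move=> T00; rewrite lee_fin ler_pdivrMr ?subr_gt0 //.
by rewrite -[in RHS](lnK T00) ler_expR mulrC.
Qed.

Lemma renyi_ber_leE x z e : 0 <= x <= 1 -> 0 < z < 1 ->
  (renyi a (ber x) (ber z) <= e%:E)%E = (T x z <= expR ((a - 1) * e)).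
Proof. by move=> hx hz; rewrite renyi_berE // lee_ln_div_expR // ber_renyi_sum_gt0. Qed.

End BernoulliRenyi.

Section ApproxRenyi.
Variables (R : realType) (a : R).
Hypothesis a_gt1 : 1 < a.
Implicit Types d e p q t w x y z : R.

Lemma is_distr_mix (U : finType) (P Q : U -> R) t : 0 <= t <= 1 ->
  is_distr P -> is_distr Q -> is_distr (fun i => (1 - t) * P i + t * Q i).
Proof.
move=> /andP[t0 t1] [P0 P1] [Q0 Q1]; split.
  by move=> x; apply: addr_ge0; apply: mulr_ge0 => //; lra.
by rewrite big_split -!big_distrr /= P1 Q1 !mulr1 subrK.
Qed.

Lemma le_renyi_approx_delta (U : finType) (P Q : U -> R) d d' :
  0 <= d -> d <= d' -> (renyi_approx a d' P Q <= renyi_approx a d P Q)%E.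
Proof.
move=> d0 dd'; have [d'0|d'0] := eqVneq d' 0.
  by have -> : d = d' by lra.
have d'p : 0 < d' by rewrite lt_neqAle eq_sym d'0 /=; lra.
have t01 : 0 <= d / d' <= 1 by rewrite divr_ge0 ?ler_pdivrMr ?mul1r //=; lra.
apply: le_ereal_inf_tmp => e [P' [P'' [Q' [Q'' [dP' dP'' dQ' dQ'' [eP eQ ->]]]]]].
apply: ereal_inf_lbound.
exists P', (fun i => (1 - d / d') * P' i + d / d' * P'' i),
  Q', (fun i => (1 - d / d') * Q' i + d / d' * Q'' i).
split => //; try exact: is_distr_mix.
by split => // x; rewrite ?eP ?eQ; field; rewrite lt0r_neq0.
Qed.

Lemma renyi_approx_ge1 (U : finType) (P Q : U -> R) d : is_distr P -> is_distr Q ->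
  1 <= d -> (renyi_approx a d P Q <= 0%:E)%E.
Proof.
move=> dP dQ d1; have dp : 0 < d by lra.
rewrite -(renyi_xx a dP); apply: ereal_inf_lbound.
exists P, P, P, (fun i => (Q i - (1 - d) * P i) / d); split => //.
  case: dP dQ => [P0 P1] [Q0 Q1]; split.
    by move=> x; apply: divr_ge0; [have := P0 x; have := Q0 x; nra | lra].
  rewrite -big_distrl /= sumrB -big_distrr /= P1 Q1.
  by rewrite mulr1 opprB addrCA subrr addr0 mulfV ?gt_eqF.
by split => // x; [ring | field; rewrite gt_eqF].
Qed.

Lemma renyi_approx_le_delta (U : finType) (P Q : U -> R) d d' e :
  is_distr P -> is_distr Q -> 0 <= d -> d <= d' -> 0 <= e ->
  (renyi_approx a d P Q <= e%:E)%E -> (renyi_approx a d' P Q <= e%:E)%E.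
Proof.
move=> dP dQ d0 dd' e0 h; have [d'1|d'1] := ltP d' 1.
  exact: le_trans (le_renyi_approx_delta P Q d0 dd') h.
by apply: le_trans (renyi_approx_ge1 dP dQ d'1) _; rewrite lee_fin.
Qed.

Lemma is_distr_ber p : 0 <= p <= 1 -> is_distr (ber p).
Proof.
move=> /andP[p0 p1]; split; first by case; rewrite /ber; lra.
by rewrite big_bool /ber /=; ring.
Qed.

Lemma is_distr_boolE (P : bool -> R) : is_distr P -> P = ber (P true) /\ 0 <= P true <= 1.
Proof.
move=> [P0]; rewrite big_bool /= => P1.
move: (P0 true) (P0 false) => Pt Pf.
split; last by apply/andP; split; lra.
by apply: funext => -[]; rewrite /ber //=; lra.
Qed.

Lemma renyi_approx_ber_le d p q x y z w : 0 <= x <= 1 -> 0 <= y <= 1 ->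
  0 <= z <= 1 -> 0 <= w <= 1 ->
  p = (1 - d) * x + d * y -> q = (1 - d) * z + d * w ->
  (renyi_approx a d (ber p) (ber q) <= renyi a (ber x) (ber z))%E.
Proof.
move=> hx hy hz hw hp hq; apply: ereal_inf_lbound.
exists (ber x), (ber y), (ber z), (ber w); split; try exact: is_distr_ber.
by split=> //; case; rewrite /ber ?hp ?hq; ring.
Qed.

Lemma renyi_approx_ber_ge d p q (K : \bar R) :
  (forall x y z w, 0 <= x <= 1 -> 0 <= y <= 1 -> 0 <= z <= 1 -> 0 <= w <= 1 ->
     p = (1 - d) * x + d * y -> q = (1 - d) * z + d * w ->
     (K <= renyi a (ber x) (ber z))%E) ->
  (K <= renyi_approx a d (ber p) (ber q))%E.
Proof.
move=> H; apply: le_ereal_inf_tmp => e [P' [P'' [Q' [Q'' [dP' dP'' dQ' dQ'' [eP eQ ->]]]]]].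
have [-> hP'] := is_distr_boolE dP'; have [_ hP''] := is_distr_boolE dP''.
have [-> hQ'] := is_distr_boolE dQ'; have [_ hQ''] := is_distr_boolE dQ''.
exact: H hP' hP'' hQ' hQ'' (eP true) (eQ true).
Qed.

Lemma renyi_approx_ber_xx d p : 0 <= p <= 1 -> (renyi_approx a d (ber p) (ber p) <= 0%:E)%E.
Proof.
move=> hp; rewrite -(renyi_xx a (is_distr_ber hp)).
by apply: (renyi_approx_ber_le hp hp hp hp); ring.
Qed.

End ApproxRenyi.

Section ApproxRenyiBer.
Variables (R : realType) (a : R).
Hypothesis a_gt1 : 1 < a.
Implicit Types d e p q x z : R.

(* Both distributions admit the same [(1 - d)]-component. *)
Lemma renyi_approx_ber_near d p q : 0 < d < 1 -> 0 <= q <= p -> p <= 1 -> p - d <= q ->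
  (renyi_approx a d (ber p) (ber q) <= 0%:E)%E /\
  (renyi_approx a d (ber q) (ber p) <= 0%:E)%E.
Proof.
move=> /andP[d0 d1] /andP[q0 qp] p1 pdq; have d1' : 0 < 1 - d by lra.
have u01 : 0 <= (1 : R) <= 1 by rewrite lexx ler01.
have o01 : 0 <= (0 : R) <= 1 by rewrite lexx ler01.
have [pd|dp] := lerP p d.
  have hp : 0 <= p / d <= 1 by rewrite divr_ge0 ?ler_pdivrMr ?mul1r //=; lra.
  have hq : 0 <= q / d <= 1 by rewrite divr_ge0 ?ler_pdivrMr ?mul1r //=; lra.
  have ep : p = (1 - d) * 0 + d * (p / d) by field; rewrite lt0r_neq0.
  have eq : q = (1 - d) * 0 + d * (q / d) by field; rewrite lt0r_neq0.
  rewrite -(renyi_xx a (is_distr_ber o01)).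
  by split; [exact: (renyi_approx_ber_le a o01 hp o01 hq ep eq) |
             exact: (renyi_approx_ber_le a o01 hq o01 hp eq ep)].
pose c := (p - d) / (1 - d).
have hc : 0 <= c <= 1 by rewrite divr_ge0 ?ler_pdivrMr ?mul1r //=; lra.
have hq : 0 <= (q - (p - d)) / d <= 1 by rewrite divr_ge0 ?ler_pdivrMr ?mul1r //=; lra.
have ep : p = (1 - d) * c + d * 1 by rewrite /c; field; rewrite lt0r_neq0.
have eq : q = (1 - d) * c + d * ((q - (p - d)) / d).
  by rewrite /c; field; rewrite !lt0r_neq0.
rewrite -(renyi_xx a (is_distr_ber hc)).
by split; [exact: (renyi_approx_ber_le a hc u01 hc hq ep eq) |
           exact: (renyi_approx_ber_le a hc hq hc u01 eq ep)].
Qed.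

(* The optimal decomposition puts the [d]-component of [ber p] at [1] and that of [ber q]
   at [0]. *)
Lemma renyi_approx_berE d p q : 0 < d < 1 -> 0 <= q -> q + d < p -> p <= 1 ->
  renyi_approx a d (ber p) (ber q) = renyi a (ber ((p - d) / (1 - d))) (ber (q / (1 - d))) /\
  renyi_approx a d (ber q) (ber p) = renyi a (ber (q / (1 - d))) (ber ((p - d) / (1 - d))).
Proof.
move=> /andP[d0 d1] q0 qdp p1; have d1' : 0 < 1 - d by lra.
set xm := (p - d) / (1 - d); set zm := q / (1 - d).
have hxm : 0 <= xm <= 1 by rewrite divr_ge0 ?ler_pdivrMr ?mul1r //=; lra.
have hzm : 0 <= zm <= 1 by rewrite divr_ge0 ?ler_pdivrMr ?mul1r //=; lra.
have xm0 : 0 < xm by apply: divr_gt0; lra.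
have zm1 : zm < 1 by rewrite ltr_pdivrMr // mul1r; lra.
have zmxm : zm < xm by rewrite ltr_pM2r ?invr_gt0 //; lra.
have u01 : 0 <= (1 : R) <= 1 by rewrite lexx ler01.
have o01 : 0 <= (0 : R) <= 1 by rewrite lexx ler01.
have ep : p = (1 - d) * xm + d * 1 by rewrite /xm; field; rewrite lt0r_neq0.
have eq : q = (1 - d) * zm + d * 0 by rewrite /zm; field; rewrite lt0r_neq0.
have xmin x y : 0 <= x <= 1 -> 0 <= y <= 1 -> p = (1 - d) * x + d * y -> xm <= x.
  by move=> /andP[x0 x1] /andP[y0 y1] ep'; rewrite /xm ler_pdivrMr //; nra.
have zmax z w : 0 <= z <= 1 -> 0 <= w <= 1 -> q = (1 - d) * z + d * w -> z <= zm.
  by move=> /andP[z0 z1] /andP[w0 w1] eq'; rewrite /zm ler_pdivlMr //; nra.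
split; apply/le_anti/andP; split.
- exact: (renyi_approx_ber_le a hxm u01 hzm o01 ep eq).
- apply: renyi_approx_ber_ge => x y z w hx hy hz hw ex ez.
  have := xmin _ _ hx hy ex; have := zmax _ _ hz hw ez.
  case/andP: hx => x0 x1; case/andP: hz => z0 z1 zz xx.
  have [->|zn0] := eqVneq z 0; first by rewrite renyi_ber_ber0 ?leey //; lra.
  have zp : 0 < z by rewrite lt_neqAle eq_sym zn0.
  rewrite !renyi_berE; try (apply/andP; split; lra).
  apply: lee_ln_div => //; first by apply: ber_renyi_sum_gt0 => //; apply/andP; split; lra.
  apply: (@le_trans _ _ (ber_renyi_sum a xm z)).
    by apply: ber_renyi_sum_le_decrR => //; try (apply/andP; split); lra.
  by apply: ber_renyi_sum_le_incrL => //; try (apply/andP; split); lra.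
- exact: (renyi_approx_ber_le a hzm o01 hxm u01 eq ep).
- apply: renyi_approx_ber_ge => z w x y hz hw hx hy ez ex.
  have := xmin _ _ hx hy ex; have := zmax _ _ hz hw ez.
  case/andP: hx => x0 x1; case/andP: hz => z0 z1 zz xx.
  have [->|xn1] := eqVneq x 1; first by rewrite renyi_ber_ber1 ?leey //; lra.
  have xl1 : x < 1 by rewrite lt_neqAle xn1.
  rewrite !renyi_berE; try (apply/andP; split; lra).
  apply: lee_ln_div => //; first by apply: ber_renyi_sum_gt0 => //; apply/andP; split; lra.
  apply: (@le_trans _ _ (ber_renyi_sum a z xm)).
    by apply: ber_renyi_sum_le_decrL => //; try (apply/andP; split); lra.
  by apply: ber_renyi_sum_le_incrR => //; lra.
Qed.

Definition Lfun_set q e d : set R := [set p | [/\ q <= p, p <= 1,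
  (renyi_approx a d (ber p) (ber q) <= e%:E)%E & (renyi_approx a d (ber q) (ber p) <= e%:E)%E]].

Lemma LfunE q e d : Defs.Lfun a q e d = sup (Lfun_set q e d).
Proof. by []. Qed.

Lemma Lfun_set_q q e d : 0 <= q <= 1 -> 0 <= e -> Lfun_set q e d q.
Proof.
move=> hq e0; split; [exact: lexx | by case/andP: hq | |];
by apply: le_trans (renyi_approx_ber_xx a d hq) _; rewrite lee_fin.
Qed.

Lemma has_sup_Lfun_set q e d : 0 <= q <= 1 -> 0 <= e -> has_sup (Lfun_set q e d).
Proof. by move=> hq e0; split; [exists q; exact: Lfun_set_q | exists 1 => y []]. Qed.

Lemma Lfun_bounds q e d : 0 <= q <= 1 -> 0 <= e -> q <= Defs.Lfun a q e d <= 1.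
Proof.
move=> hq e0; have Sq := Lfun_set_q d hq e0.
rewrite LfunE sup_upper_bound //=; last exact: has_sup_Lfun_set.
by apply: ge_sup; [exists q | move=> y []].
Qed.

Lemma le_Lfun q e e' d d' : 0 <= q <= 1 -> 0 <= e -> e <= e' -> 0 <= d -> d <= d' ->
  Defs.Lfun a q e d <= Defs.Lfun a q e' d'.
Proof.
move=> hq e0 ee' d0 dd'; rewrite !LfunE.
have e'0 : 0 <= e' by exact: le_trans ee'.
have SS' p : Lfun_set q e d p -> Lfun_set q e' d' p.
  move=> [qp p1 r1 r2]; have hp : 0 <= p <= 1 by case/andP: hq => q0 _; rewrite p1 (le_trans q0).
  split => //; apply: le_trans (_ : e%:E <= e'%:E)%E; rewrite ?lee_fin //.
  - exact: renyi_approx_le_delta (is_distr_ber hp) (is_distr_ber hq) d0 dd' e0 r1.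
  - exact: renyi_approx_le_delta (is_distr_ber hq) (is_distr_ber hp) d0 dd' e0 r2.
apply: sup_le; last exact: has_sup_Lfun_set.
  by move=> x Sx; exists x; split; [exact: SS' | exact: lexx].
by exists q; exact: Lfun_set_q.
Qed.

End ApproxRenyiBer.

Section BernoulliRenyiContinuity.
Variables (R : realType) (a : R).
Hypothesis a_gt1 : 1 < a.
Implicit Types x y z E : R.
Local Notation T := (ber_renyi_sum a).

Lemma ber_renyi_sum_lipL x y z : 0 < z < 1 -> 0 <= y -> y <= x -> x <= 1 ->
  T x z <= T y z + a * z `^ (1 - a) * (x - y).
Proof.
move=> /andP[z0 z1] y0 yx x1; have a1 := a_gt1.
have [x0|xn0] := eqVneq x 0.
  by rewrite (_ : y = x) ?subrr ?mulr0 ?addr0 //; lra.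
have xp : 0 < x by rewrite lt_neqAle eq_sym xn0 /=; lra.
have := powR_tangent (c := a) (y := y) (or_introl (conj (ltW a1) y0)) xp.
have : x `^ a / x <= 1 by rewrite ler_pdivrMr // mul1r ge1r_powR // ?xp //; lra.
set k := x `^ a / x => k1 tangent.
have h1 : x `^ a - y `^ a <= a * (x - y).
  have : 0 <= a * (x - y) * (1 - k) by rewrite !mulr_ge0 //; lra.
  nra.
have h2 : (1 - x) `^ a - (1 - y) `^ a <= 0.
  by rewrite subr_le0; apply: ge0_ler_powR; rewrite ?nnegrE; lra.
have := ler_wpM2r (powR_ge0 z (1 - a)) h1.
have := ler_wpM2r (powR_ge0 (1 - z) (1 - a)) h2.
rewrite /ber_renyi_sum mul0r; nra.
Qed.

Lemma ber_renyi_sum_lipR x y z : 0 <= z < 1 -> 0 < y -> y <= x -> x < 1 ->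
  T z x <= T z y + (1 - z) `^ a * (a - 1) * ((1 - x) `^ (1 - a) / (1 - x)) * (x - y).
Proof.
move=> /andP[z0 z1] y0 yx x1; have a1 := a_gt1.
have h1 : x `^ (1 - a) - y `^ (1 - a) <= 0.
  by rewrite subr_le0; apply: le0_ger_powR => //; lra.
have x1' : 0 < 1 - x by lra.
have := powR_tangent (c := 1 - a) (y := 1 - y) (or_intror (conj _ _)) x1'.
move=> /(_ ltac:(lra) ltac:(lra)); set k := _ / (1 - x) => tangent.
have h2 : (1 - x) `^ (1 - a) - (1 - y) `^ (1 - a) <= (a - 1) * k * (x - y).
  by move: tangent; rewrite (_ : (1 - a) * k * _ = - ((a - 1) * k * (x - y))); [lra | ring].
have := ler_wpM2l (powR_ge0 z a) h1.
have := ler_wpM2l (powR_ge0 (1 - z) a) h2.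
rewrite /ber_renyi_sum mulr0; nra.
Qed.

Lemma ber_renyi_sum_gt_near1 z E : 0 <= z < 1 -> 0 <= E ->
  exists2 eta, 0 < eta & forall x, 1 - eta < x < 1 -> E < T z x.
Proof.
move=> /andP[z0 z1] E0; have a1 := a_gt1.
have za : 0 < (1 - z) `^ a by apply: powR_gt0; lra.
pose M := E / (1 - z) `^ a.
have M0 : 0 <= M by apply: divr_ge0; lra.
pose eta := (M + 1)^-1 `^ (a - 1)^-1.
have eta_pow : eta `^ (a - 1) = (M + 1)^-1.
  by rewrite -powRrM mulVf ?powRr1 ?invr_ge0 ?subr_eq0 ?gt_eqF //; lra.
exists eta; first by apply: powR_gt0; rewrite invr_gt0; lra.
move=> x /andP[x1' x1]; have x0 : 0 < 1 - x by lra.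
have : (1 - x) `^ (a - 1) < (M + 1)^-1.
  by rewrite -eta_pow; apply: gt0_ltr_powR; rewrite ?subr_gt0 ?nnegrE ?powR_ge0 //; lra.
rewrite -[(1 - x) `^ _]invrK ltf_pV2 ?posrE ?invr_gt0 ?powR_gt0 //; last by lra.
rewrite -powRN opprB => hx.
have : (1 - z) `^ a * (M + 1) < (1 - z) `^ a * (1 - x) `^ (1 - a) by rewrite ltr_pM2l.
have -> : (1 - z) `^ a * (M + 1) = E + (1 - z) `^ a.
  by rewrite mulrDr mulr1 /M mulrC divfK ?gt_eqF.
have : 0 <= z `^ a * x `^ (1 - a) by rewrite mulr_ge0 ?powR_ge0.
rewrite /ber_renyi_sum; nra.
Qed.

End BernoulliRenyiContinuity.

Section LeftAdherence.
Variable R : realType.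

Definition left_adherent (P : R -> Prop) (s : R) :=
  forall eta : R, 0 < eta -> exists2 x, P x & s - eta < x <= s.

Lemma left_adherent_le (P : R -> Prop) (f : R -> R) s E C : 0 <= C ->
  left_adherent P s -> (forall x, P x -> x <= s -> f s <= E + C * (s - x)) -> f s <= E.
Proof.
move=> C0 Ps hf; apply/ler_addgt0Pr => eps eps0.
have C1 : 0 < C + 1 by lra.
have [x Px /andP[sx xs]] := Ps _ (divr_gt0 eps0 C1).
apply: le_trans (hf x Px xs) _; rewrite lerD2l.
move: sx; rewrite ltrBlDr -ltrBlDl ltr_pdivlMr // => sx.
nra.
Qed.

End LeftAdherence.

Section LfunClosed.
Variables (R : realType) (a d q e : R).
Hypotheses (a_gt1 : 1 < a) (d01 : 0 < d < 1) (q01 : 0 <= q <= 1) (e_ge0 : 0 <= e).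
Local Notation T := (ber_renyi_sum a).
Local Notation L := (Defs.Lfun a q e d).

(* The canonical decomposition (renyi_approx_berE) maps [p] to [(p - d) / (1 - d)] and [q]
   to [zm]; [xL] is the image of [L]. *)
Let zm := q / (1 - d).
Let xL := (L - d) / (1 - d).
Let E := expR ((a - 1) * e).

Definition Lfun_feasible x := zm < x /\
  (renyi a (ber x) (ber zm) <= e%:E)%E /\ (renyi a (ber zm) (ber x) <= e%:E)%E.

Section NonDegenerate.
Hypothesis qdL : q + d < L.

Lemma Lfun_left_adherent : left_adherent Lfun_feasible xL.
Proof.
move: d01 q01 qdL => /andP[d0 d1] /andP[q0 q1] qdL' eta eta0; have d1' : 0 < 1 - d by lra.
pose th := Num.min (L - d - q) (eta * (1 - d)).
have th0 : 0 < th by rewrite lt_min; apply/andP; split; [lra | exact: mulr_gt0].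
have [thq theta] : th <= L - d - q /\ th <= eta * (1 - d) by rewrite /th !ge_min !lexx orbT.
clearbody th.
have hs := has_sup_Lfun_set a d q01 e_ge0.
have [p0 [qp0 p01 r1 r2] Lp0] := sup_adherent th0 hs; rewrite -LfunE in Lp0.
have p0L : p0 <= L by rewrite LfunE; apply: sup_upper_bound.
have qdp0 : q + d < p0 by lra.
have [c1 c2] := renyi_approx_berE a_gt1 d01 q0 qdp0 p01.
exists ((p0 - d) / (1 - d)); last first.
  rewrite ler_pM2r ?invr_gt0 // lerD2r p0L andbT.
  rewrite (_ : xL - eta = (L - eta * (1 - d) - d) / (1 - d)).
    by rewrite ltr_pM2r ?invr_gt0 //; lra.
  by rewrite /xL; field; rewrite gt_eqF.
split; first by rewrite /zm ltr_pM2r ?invr_gt0 //; lra.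
by rewrite -c1 -c2.
Qed.

Lemma Lfun_zm_gt0 : 0 < zm.
Proof.
have [x [zx [r1 _]] _] := Lfun_left_adherent ltr01.
have zm0 : 0 <= zm by move: d01 q01 => /andP[_ d1] /andP[q0 _]; rewrite divr_ge0 //; lra.
rewrite lt_neqAle zm0 andbT; apply/eqP => zm_0; rewrite -zm_0 in zx r1.
by move: r1; rewrite renyi_ber_ber0 ?leye_eq.
Qed.

Lemma Lfun_zm_xL : zm < xL <= 1.
Proof.
move: d01 q01 qdL => /andP[d0 d1] /andP[q0 q1] qdL'; have d1' : 0 < 1 - d by lra.
have /andP[_ L1] := Lfun_bounds a d q01 e_ge0.
by rewrite /zm /xL ltr_pM2r ?invr_gt0 // ler_pdivrMr // mul1r; apply/andP; split; lra.
Qed.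

Lemma ber_renyi_sum_xL_zm : T xL zm <= E.
Proof.
have zm0 := Lfun_zm_gt0; have /andP[zxL xL1] := Lfun_zm_xL.
have zm1 : 0 < zm < 1 by rewrite zm0; lra.
apply: (left_adherent_le (f := T^~ zm) (s := xL) (P := Lfun_feasible) (C := a * zm `^ (1 - a))).
- by rewrite mulr_ge0 ?powR_ge0 // ltW // (lt_trans ltr01 a_gt1).
- exact: Lfun_left_adherent.
move=> x [zx [r1 _]] xxL; have hx : 0 <= x <= 1 by apply/andP; split; lra.
rewrite renyi_ber_leE // in r1.
by apply: le_trans (ber_renyi_sum_lipL a_gt1 zm1 _ xxL xL1) _; rewrite ?lerD2r //; lra.
Qed.

Lemma Lfun_xL_lt1 : xL < 1.
Proof.
have zm0 := Lfun_zm_gt0; have /andP[zxL xL1] := Lfun_zm_xL.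
rewrite lt_neqAle xL1 andbT; apply/eqP => xL_1.
have [eta eta0 big] := ber_renyi_sum_gt_near1 a_gt1 (z := zm) (E := E)
  ltac:(by rewrite ltW //=; lra) (ltW (expR_gt0 _)).
have [x [zx [_ r2]] /andP[xeta xxL]] := Lfun_left_adherent eta0.
rewrite -/xL xL_1 in xeta xxL.
have [x1|xn1] := eqVneq x 1; first by move: r2; rewrite x1 renyi_ber_ber1 ?leye_eq //; lra.
have x1 : x < 1 by rewrite lt_neqAle xn1.
move: r2; rewrite renyi_ber_leE //; last by rewrite (lt_trans zm0) //= x1.
  by rewrite leNgt big // xeta.
by rewrite ltW //=; lra.
Qed.

Lemma ber_renyi_sum_zm_xL : T zm xL <= E.
Proof.
have zm0 := Lfun_zm_gt0; have /andP[zxL xL1] := Lfun_zm_xL; have xL1' := Lfun_xL_lt1.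
apply: (left_adherent_le (f := T zm) (s := xL) (P := Lfun_feasible)
  (C := (1 - zm) `^ a * (a - 1) * ((1 - xL) `^ (1 - a) / (1 - xL)))).
- rewrite mulr_ge0 ?divr_ge0 ?powR_ge0 ?subr_ge0 ?(ltW xL1') //.
  by rewrite mulr_ge0 ?powR_ge0 // subr_ge0 ltW.
- exact: Lfun_left_adherent.
move=> x [zx [_ r2]] xxL; have hx : 0 < x < 1 by apply/andP; split; lra.
rewrite renyi_ber_leE // in r2; last by rewrite ltW //=; lra.
by apply: le_trans (ber_renyi_sum_lipR a_gt1 _ _ xxL xL1') _; rewrite ?lerD2r //; lra.
Qed.

End NonDegenerate.

Lemma le_Lfun_renyi_approx (p : R) : q <= p -> p <= L ->
  (renyi_approx a d (ber p) (ber q) <= e%:E)%E /\ (renyi_approx a d (ber q) (ber p) <= e%:E)%E.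
Proof.
move: d01 q01 => /andP[d0 d1] /andP[q0 q1] qp pL; have d1' : 0 < 1 - d by lra.
have /andP[_ L1] := Lfun_bounds a d q01 e_ge0.
have [pdq|qdp] := lerP (p - d) q.
  have [h1 h2] := renyi_approx_ber_near a d01 (introT andP (conj q0 qp)) (le_trans pL L1) pdq.
  by split; apply: le_trans (_ : 0%:E <= e%:E)%E; rewrite ?lee_fin.
have qdL : q + d < L by lra.
have qdp' : q + d < p by rewrite -ltrBrDr.
have [c1 c2] := renyi_approx_berE a_gt1 d01 q0 qdp' (le_trans pL L1).
have zm0 := Lfun_zm_gt0 qdL; have /andP[zxL xL1] := Lfun_zm_xL qdL.
have xL1' := Lfun_xL_lt1 qdL.
have zxp : zm < (p - d) / (1 - d) by rewrite ltr_pM2r ?invr_gt0 //; lra.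
have xpL : (p - d) / (1 - d) <= xL by rewrite ler_pM2r ?invr_gt0 //; lra.
rewrite c1 c2 -/zm; split.
- rewrite renyi_ber_leE //; try (apply/andP; split; lra).
  apply: le_trans (ber_renyi_sum_xL_zm qdL).
  by apply: ber_renyi_sum_le_incrL => //; try (apply/andP; split); lra.
- rewrite renyi_ber_leE //; try (apply/andP; split; lra).
  apply: le_trans (ber_renyi_sum_zm_xL qdL).
  by apply: ber_renyi_sum_le_incrR => //; lra.
Qed.

End LfunClosed.

Section Psi.
Variables (R : realType) (a e0 d0 r e1 d1 Dd D : R).
Hypotheses (a_gt1 : 1 < a) (e0_gt0 : 0 < e0) (d0_gt0 : 0 < d0)
  (r_gt0 : 0 < r) (e1_gt0 : 0 < e1) (d1_gt0 : 0 < d1) (Dd_gt0 : 0 < Dd).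

Local Notation psi := (psi a e0 d0 r e1 d1 Dd D).
Local Notation psi_seq := (psi_seq a e0 d0 r e1 d1 Dd D).
Local Notation N := (Ndisc D Dd).
Implicit Types x Dinf : R.

(* The budgets of the [i]-th candidate in the definition of [psi], with [j = i - 1]. *)
Definition step_eps (j : nat) := e0 + e1 * (Dd * j%:R) `^ r.
Definition step_delta (j : nat) := d0 + d1 * (Dd * j%:R) `^ r.

Lemma size_psi_seq n : size (psi_seq n) = n.+1.
Proof. by elim: n => [|n IH] //=; rewrite size_rcons IH. Qed.

Lemma nth_psi_seq n k : (k <= n)%N -> nth 0 (psi_seq n) k = psi k.
Proof.
elim: n => [|n IH]; first by rewrite leqn0 => /eqP ->.
rewrite leq_eqVlt => /orP[/eqP -> //|]; rewrite ltnS => kn.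
by rewrite /= nth_rcons size_psi_seq ltnS kn IH.
Qed.

Lemma psiS n : psi n.+1 =
  \big[Order.min/1]_(j < minn n.+1 N) Defs.Lfun a (psi (n - j)) (step_eps j) (step_delta j).
Proof.
rewrite /Defs.psi /= nth_rcons size_psi_seq ltnn eqxx.
by apply: eq_bigr => j _; rewrite subSS nth_psi_seq // leq_subr.
Qed.

Lemma step_eps_ge0 j : 0 <= step_eps j.
Proof. by rewrite addr_ge0 ?mulr_ge0 ?powR_ge0 // ltW. Qed.

Lemma step_delta_ge0 j : 0 <= step_delta j.
Proof. by rewrite addr_ge0 ?mulr_ge0 ?powR_ge0 // ltW. Qed.

Lemma step_eps_le j x : 0 <= x -> Dd * j%:R <= x -> step_eps j <= e0 + e1 * x `^ r.
Proof.
move=> x0 jx; rewrite lerD2l ler_pM2l //.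
by apply: ge0_ler_powR; rewrite ?nnegrE //; [exact: ltW | rewrite mulr_ge0 // ltW].
Qed.

Lemma step_delta_le j x : 0 <= x -> Dd * j%:R <= x -> step_delta j <= d0 + d1 * x `^ r.
Proof.
move=> x0 jx; rewrite lerD2l ler_pM2l //.
by apply: ge0_ler_powR; rewrite ?nnegrE //; [exact: ltW | rewrite mulr_ge0 // ltW].
Qed.

Lemma Dd_natr_le (i j : nat) : (i <= j)%N -> Dd * i%:R <= Dd * j%:R.
Proof. by move=> ij; rewrite ler_pM2l // ler_nat. Qed.

Lemma psi_itv n : 0 <= psi n <= 1.
Proof.
elim/ltn_ind: n => -[|n] IH; first by rewrite lexx ler01.
rewrite psiS; apply: (big_ind (fun x => 0 <= x <= 1)); first by rewrite ler01 lexx.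
  by move=> x y hx hy; rewrite /Order.min; case: ifP.
move=> j _; have hq := IH (n - j)%N (leq_ltn_trans (leq_subr _ _) (ltnSn _)).
have /andP[qL L1] := Lfun_bounds a (step_delta j) hq (step_eps_ge0 j).
by rewrite L1 (le_trans _ qL) //; case/andP: hq.
Qed.

Lemma psi_le_Lfun n k : (0 < k <= minn n N)%N ->
  psi n <= Defs.Lfun a (psi (n - k)) (step_eps k.-1) (step_delta k.-1).
Proof.
case: n => [|n]; first by rewrite min0n; case: k.
case: k => // k /andP[_ kn]; rewrite psiS subSS.
exact: (bigmin_le _ (Ordinal kn) (fun j : 'I__ => Defs.Lfun a (psi (n - j)) _ _)).
Qed.

Lemma psi_leS n : psi n <= psi n.+1.
Proof.
rewrite psiS; apply: le_bigmin; first by case/andP: (psi_itv n).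
case=> -[|j] /= hj _.
  by rewrite subn0; case/andP: (Lfun_bounds a (step_delta 0) (psi_itv n) (step_eps_ge0 0)).
have hjn : (0 < j.+1 <= minn n N)%N.
  by move: hj; rewrite !leq_min ltnS => /andP[h1 h2]; rewrite h1 (ltnW h2).
apply: le_trans (psi_le_Lfun hjn) _; apply: le_Lfun => //.
- exact: psi_itv.
- exact: step_eps_ge0.
- by apply: step_eps_le; rewrite ?Dd_natr_le // mulr_ge0 ?ltW.
- exact: step_delta_ge0.
- by apply: step_delta_le; rewrite ?Dd_natr_le // mulr_ge0 ?ltW.
Qed.

Lemma le_psi m n : (m <= n)%N -> psi m <= psi n.
Proof.
elim: n => [|n IH]; first by rewrite leqn0 => /eqP ->.
rewrite leq_eqVlt => /orP[/eqP -> //|]; rewrite ltnS => /IH mn.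
exact: le_trans mn (psi_leS n).
Qed.

Lemma renyi_approx_ber_psi Dinf m n : (m <= n)%N -> (n - m <= N)%N ->
  Dd * (n - m).-1%:R <= Dinf -> d0 + d1 * Dinf `^ r < 1 ->
  (renyi_approx a (d0 + d1 * Dinf `^ r) (ber (psi n)) (ber (psi m))
     <= (e0 + e1 * Dinf `^ r)%:E)%E /\
  (renyi_approx a (d0 + d1 * Dinf `^ r) (ber (psi m)) (ber (psi n))
     <= (e0 + e1 * Dinf `^ r)%:E)%E.
Proof.
move=> mn kN kD dD1.
have D0 : 0 <= Dinf by apply: le_trans kD; rewrite mulr_ge0 // ltW.
have eps0 : 0 <= e0 + e1 * Dinf `^ r by rewrite addr_ge0 ?mulr_ge0 ?powR_ge0 // ltW.
have [k0|kpos] := posnP (n - m).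
  have -> : n = m by apply/eqP; rewrite eqn_leq mn andbT -subn_eq0 k0.
  by split; apply: le_trans (renyi_approx_ber_xx a _ (psi_itv m)) _; rewrite lee_fin.
have hL := psi_le_Lfun (n := n) (k := n - m) ltac:(by rewrite kpos leq_min leq_subr kN).
rewrite subKn // in hL.
have dle := step_delta_le D0 kD; have ele := step_eps_le D0 kD.
have d01 : 0 < step_delta (n - m).-1 < 1.
  by rewrite (le_lt_trans dle dD1) andbT ltr_pwDl ?mulr_ge0 ?powR_ge0 ?ltW.
have [c1 c2] := le_Lfun_renyi_approx a_gt1 d01 (psi_itv m) (step_eps_ge0 _) (le_psi mn) hL.
have widen (P Q : bool -> R) : is_distr P -> is_distr Q ->
    (renyi_approx a (step_delta (n - m).-1) P Q <= (step_eps (n - m).-1)%:E)%E ->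
    (renyi_approx a (d0 + d1 * Dinf `^ r) P Q <= (e0 + e1 * Dinf `^ r)%:E)%E.
  move=> dP dQ h; rewrite -lee_fin in ele; apply: le_trans ele.
  exact: renyi_approx_le_delta dP dQ (step_delta_ge0 _) dle (step_eps_ge0 _) h.
by split; apply: widen; rewrite //; apply: is_distr_ber; exact: psi_itv.
Qed.

End Psi.

Section Tensorization.
Variables (R : realType) (a : R) (U : finType).
Hypothesis a_gt1 : 1 < a.

Let a_neq0 : a != 0. Proof. by rewrite gt_eqF // (lt_trans ltr01 a_gt1). Qed.

Lemma renyi_term_ge0 (x y : R) : 0 <= x -> 0 <= y -> (0%:E <= renyi_term a x y)%E.
Proof.
move=> x0 y0; rewrite /renyi_term; case: (y == 0); case: (x == 0) => //=;
  by rewrite ?leey ?lee_fin ?mulr_ge0 ?powR_ge0.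
Qed.

Lemma renyi_termE (x y : R) : 0 <= x -> 0 <= y -> (y = 0 -> x = 0) ->
  renyi_term a x y = (x `^ a * y `^ (1 - a))%:E.
Proof.
move=> x0 y0 yx; rewrite /renyi_term; have [y_0|//] := eqVneq y 0.
by rewrite (yx y_0) eqxx powR0 ?mul0r.
Qed.

Lemma renyi_pinfty (V : finType) (P Q : V -> R) (t : V) :
  (forall x, 0 <= P x) -> (forall x, 0 <= Q x) -> Q t = 0 -> P t != 0 ->
  renyi a P Q = +oo%E.
Proof.
move=> P0 Q0 Qt Pt; rewrite /renyi (bigD1 t) //= {1}/renyi_term Qt eqxx (negbTE Pt).
rewrite addye //; have : (0%:E <= \sum_(i | i != t) renyi_term a (P i) (Q i))%E.
  by apply: sume_ge0 => i _; exact: renyi_term_ge0.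
by case: (\sum_(i | i != t) _)%E.
Qed.

Definition prod_distr (G : U -> bool -> R) : {set U} -> R :=
  fun S => \prod_(v : U) G v (v \in S).

Lemma sum_prod_distr (G : U -> bool -> R) :
  \sum_(S : {set U}) prod_distr G S = \prod_(v : U) \sum_(b : bool) G v b.
Proof.
rewrite bigA_distr_bigA (reindex (fun S : {set U} => [ffun v => v \in S])) /=.
  by apply: eq_bigr => S _; apply: eq_bigr => v _; rewrite ffunE.
exists (fun f : {ffun U -> bool} => [set v | f v]) => [S _|f _].
  by apply/setP => v; rewrite inE ffunE.
by apply/ffunP => v; rewrite ffunE inE.
Qed.

Lemma is_distr_prod (G : U -> bool -> R) : (forall v, is_distr (G v)) -> is_distr (prod_distr G).
Proof.
move=> hG; split; first by move=> S; apply: prodr_ge0 => v _; case: (hG v).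
by rewrite sum_prod_distr big1 // => v _; case: (hG v).
Qed.

Section OneCoordinate.
Variables (u : U) (W : U -> bool -> R).
Hypothesis W_distr : forall v, is_distr (W v).

Definition set_coord (h : bool -> R) : U -> bool -> R :=
  fun v => if v == u then h else W v.
Definition other_coords (S : {set U}) := \prod_(v | v != u) W v (v \in S).

Lemma other_coords_ge0 S : 0 <= other_coords S.
Proof. by apply: prodr_ge0 => v _; case: (W_distr v). Qed.

Lemma prod_distr_set_coord h S : prod_distr (set_coord h) S = h (u \in S) * other_coords S.
Proof.
rewrite /prod_distr (bigD1 u) //= /set_coord eqxx; congr (_ * _).
by apply: eq_bigr => v vu; rewrite (negbTE vu).
Qed.

Lemma sum_prod_distr_set_coord h :
  \sum_(S : {set U}) prod_distr (set_coord h) S = \sum_(b : bool) h b.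
Proof.
rewrite sum_prod_distr (bigD1 u) //= /set_coord eqxx [X in _ * X]big1 ?mulr1 // => v vu.
by rewrite (negbTE vu); case: (W_distr v).
Qed.

Lemma is_distr_set_coord h : is_distr h -> forall v, is_distr (set_coord h v).
Proof. by move=> hh v; rewrite /set_coord; case: eqP. Qed.

Lemma renyi_set_coord (B C : bool -> R) : is_distr B -> is_distr C ->
  (renyi a (prod_distr (set_coord B)) (prod_distr (set_coord C)) <= renyi a B C)%E.
Proof.
move=> [B0 _] [C0 _].
have [/existsP[b /andP[/eqP Cb Bb]]|] := boolP [exists b, (C b == 0) && (B b != 0)].
  by rewrite (renyi_pinfty B0 C0 Cb Bb) leey.
rewrite negb_exists => /forallP CB.
have CB0 b : C b = 0 -> B b = 0 by move=> Cb; move: (CB b); rewrite Cb eqxx negbK => /eqP.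
pose h b := B b `^ a * C b `^ (1 - a).
rewrite /renyi (_ : (\sum_(b : bool) renyi_term a (B b) (C b) = (\sum_(b : bool) h b)%:E)%E);
  last by rewrite -sumEFin; apply: eq_bigr => b _; rewrite renyi_termE ?B0 ?C0 //; exact: CB0.
suff -> : (\sum_(S : {set U}) renyi_term a (prod_distr (set_coord B) S)
            (prod_distr (set_coord C) S) = (\sum_(S : {set U}) prod_distr (set_coord h) S)%:E)%E.
  by rewrite sum_prod_distr_set_coord.
rewrite -sumEFin; apply: eq_bigr => S _; have w0 := other_coords_ge0 S.
rewrite !prod_distr_set_coord renyi_termE ?mulr_ge0 //; last first.
  by move=> /eqP; rewrite mulf_eq0 => /orP[/eqP/CB0 ->|/eqP ->]; rewrite ?mul0r ?mulr0.
by rewrite !powRM // mulrACA powR_mul_powR1B.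
Qed.

End OneCoordinate.

Lemma renyi_approx_mech_le (u : U) (f : R -> R) (X X' : U -> R) d :
  (forall v, v != u -> X v = X' v) ->
  (forall v, 0 <= f (X v) <= 1) -> (forall v, 0 <= f (X' v) <= 1) ->
  (renyi_approx a d (mech f X) (mech f X') <=
     renyi_approx a d (ber (f (X u))) (ber (f (X' u))))%E.
Proof.
move=> XX' fX fX'; pose W v := ber (f (X v)).
have W_distr v : is_distr (W v) by exact: is_distr_ber.
have mechE Y : (forall v, v != u -> Y v = X v) ->
    mech f Y = prod_distr (set_coord u W (ber (f (Y u)))).
  move=> YX; apply: funext => S; apply: eq_bigr => v _.
  by rewrite /set_coord; case: eqVneq => [-> //|/YX ->].
rewrite (mechE X) // (mechE X') => [|v /XX' //].
apply: le_ereal_inf_tmp => _ [B' [B'' [C' [C'' [dB' dB'' dC' dC'' [eB eC ->]]]]]].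
apply: le_trans (renyi_set_coord u W_distr dB' dC').
apply: ereal_inf_lbound.
exists (prod_distr (set_coord u W B')), (prod_distr (set_coord u W B'')),
  (prod_distr (set_coord u W C')), (prod_distr (set_coord u W C'')).
split; try by apply: is_distr_prod; apply: is_distr_set_coord.
by split => // S; rewrite !prod_distr_set_coord // ?eB ?eC; ring.
Qed.

End Tensorization.

Section Discretization.
Variables (R : realType) (Dd : R).
Hypothesis Dd_gt0 : 0 < Dd.
Implicit Types x y D : R.

Definition disc_index (y : R) : nat := `|Num.floor (y / Dd)|%N.

Lemma disc_indexE y : 0 <= y -> (disc_index y)%:R = (Num.floor (y / Dd))%:~R :> R.
Proof. by move=> y0; rewrite natr_absz ger0_norm // floor_ge0 divr_ge0 // ltW. Qed.

Lemma le_disc_index x y : 0 <= y -> y <= x -> (disc_index y <= disc_index x)%N.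
Proof.
move=> y0 yx; rewrite -(ler_nat R) !disc_indexE ?(le_trans y0) // ler_int.
by apply: le_floor; rewrite ler_pM2r ?invr_gt0.
Qed.

Lemma disc_index_gap x y : 0 <= y -> y <= x ->
  ((disc_index x - disc_index y)%N%:R : R) < (x - y) / Dd + 1.
Proof.
move=> y0 yx; rewrite natrB ?le_disc_index // !disc_indexE ?(le_trans y0) // mulrBl.
have /andP[fx _] := floor_itv (x / Dd); have /andP[_ fy] := floor_itv (y / Dd).
by rewrite intrD in fy; lra.
Qed.

Lemma disc_index_gap_le_Ndisc x y D : 0 <= y -> y <= x -> x - y <= D ->
  (disc_index x - disc_index y <= Ndisc D Dd)%N.
Proof.
move=> y0 yx xyD; have D0 : 0 <= D / Dd by apply: divr_ge0; [lra | exact: ltW].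
rewrite -ltnS -(ltr_nat R) mulrSr natr_absz ger0_norm ?ceil_ge0; last by lra.
have := ceil_ge (D / Dd); have := disc_index_gap y0 yx.
have : (x - y) / Dd <= D / Dd by rewrite ler_pM2r ?invr_gt0.
lra.
Qed.

Lemma disc_index_gap_le x y : 0 <= y -> y <= x ->
  Dd * (disc_index x - disc_index y).-1%:R <= x - y.
Proof.
move=> y0 yx; have := disc_index_gap y0 yx.
case: (disc_index x - disc_index y)%N => [_|k]; first by rewrite mulr0 subr_ge0.
rewrite -natr1 -ltrBlDr addrK ltr_pdivlMr // mulrC => /ltW.
by rewrite -pred_Sn.
Qed.

End Discretization.

Section Mechanism.
Variables (R : realType) (a e0 d0 r e1 d1 Dd D : R).
Hypotheses (a_gt1 : 1 < a) (e0_gt0 : 0 < e0) (d0_gt0 : 0 < d0) (r_gt0 : 0 < r)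
  (e1_gt0 : 0 < e1) (d1_gt0 : 0 < d1) (Dd_gt0 : 0 < Dd).

Local Notation phi := (phi a e0 d0 r e1 d1 Dd D).
Local Notation psi := (psi a e0 d0 r e1 d1 Dd D).
Implicit Types x y Dinf : R.

Lemma phiE y : phi y = psi (disc_index Dd y).
Proof. by []. Qed.

Lemma renyi_approx_ber_phi x y Dinf : 0 <= y -> y <= x -> x - y <= Dinf -> Dinf <= D ->
  d0 + d1 * Dinf `^ r < 1 ->
  (renyi_approx a (d0 + d1 * Dinf `^ r) (ber (phi x)) (ber (phi y))
     <= (e0 + e1 * Dinf `^ r)%:E)%E /\
  (renyi_approx a (d0 + d1 * Dinf `^ r) (ber (phi y)) (ber (phi x))
     <= (e0 + e1 * Dinf `^ r)%:E)%E.
Proof.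
move=> y0 yx xyD DinfD dD1; rewrite !phiE.
apply: renyi_approx_ber_psi => //; first exact: le_disc_index.
  exact: disc_index_gap_le_Ndisc (le_trans xyD DinfD).
exact: le_trans (disc_index_gap_le Dd_gt0 y0 yx) xyD.
Qed.

Lemma renyi_approx_mech_phi (U : finType) (X X' : U -> R) (u : U) Dinf :
  (forall v, 0 <= X v) -> (forall v, 0 <= X' v) -> (forall v, v != u -> X v = X' v) ->
  `|X u - X' u| <= Dinf -> Dinf <= D -> d0 + d1 * Dinf `^ r < 1 ->
  (renyi_approx a (d0 + d1 * Dinf `^ r) (mech phi X) (mech phi X')
     <= (e0 + e1 * Dinf `^ r)%:E)%E.
Proof.
move=> X0 X'0 XX' XuD DinfD dD1.
have phi01 y : 0 <= phi y <= 1 by rewrite phiE; exact: psi_itv.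
apply: le_trans (renyi_approx_mech_le a_gt1 _ XX' (fun v => phi01 _) (fun v => phi01 _)) _.
move: XuD; rewrite ler_norml => /andP[XX'u X'Xu].
have [X'X|XltX'] := lerP (X' u) (X u).
  have xy : X u - X' u <= Dinf by lra.
  by have [] := renyi_approx_ber_phi (X'0 u) X'X xy DinfD dD1.
have yx : X' u - X u <= Dinf by lra.
by have [] := renyi_approx_ber_phi (X0 u) (ltW XltX') yx DinfD dD1.
Qed.

End Mechanism.

Unset Implicit Arguments. Set Strict Implicit.

Theorem mainTheorem5 (R : realType) (U : finType)
  (a e0 d0 r e1 d1 Dd D : R)
  (ha : 1 < a) (he0 : 0 < e0) (hd0 : 0 < d0) (hr : 0 < r)
  (he1 : 0 < e1) (hd1 : 0 < d1) (hDd : 0 < Dd) (hD : 0 < D)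
  (X X' : U -> R) (u : U) (Dinf : R)
  (hX : forall v, 0 <= X v) (hX' : forall v, 0 <= X' v)
  (hdiff : forall v, v != u -> X v = X' v)
  (hu : `|X u - X' u| <= Dinf) (hDinf : Dinf <= D)
  (hdelta : d0 + d1 * Dinf `^ r < 1) :
  (maxe (renyi_approx a (d0 + d1 * Dinf `^ r)
           (mech (phi a e0 d0 r e1 d1 Dd D) X)
           (mech (phi a e0 d0 r e1 d1 Dd D) X'))
        (renyi_approx a (d0 + d1 * Dinf `^ r)
           (mech (phi a e0 d0 r e1 d1 Dd D) X')
           (mech (phi a e0 d0 r e1 d1 Dd D) X))
   <= (e0 + e1 * Dinf `^ r)%:E)%E.
Proof.
have hdiff' v : v != u -> X' v = X v by move=> /hdiff ->.
have mech_le := renyi_approx_mech_phi ha he0 hd0 hr he1 hd1 hDd (u := u).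
rewrite ge_max; apply/andP; split; apply: mech_le => //.
by rewrite distrC.
Qed.
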